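(* Let $q$ be a prime power and $m$ a positive integer with $\gcd(m,q)=1$, and let $R=\mathbb{F}_q[x]/\langle x^m-1\rangle$. Let $C$ and $D$ be quasi-cyclic codes over $\mathbb{F}_q$ of length $2m$ and index $2$, viewed as $R$-submodules of $R^2$. Suppose $C$ is generated (as an $R$-module) by $(g_{11}(x),g_{12}(x))$ and $(0,g_{22}(x))$, and $D$ is generated by $(f_{11}(x),f_{12}(x))$ and $(0,f_{22}(x))$, where the polynomials $g_{ij}(x),f_{ij}(x)\in\mathbb{F}_q[x]$ satisfy $g_{11}(x)\mid x^m-1$, $g_{22}(x)\mid x^m-1$, $\deg g_{12}(x)<\deg g_{22}(x)$, $g_{11}(x)g_{22}(x)\mid (x^m-1)g_{12}(x)$, and likewise $f_{11}(x)\mid x^m-1$, $f_{22}(x)\mid x^m-1$, $\deg f_{12}(x)<\deg f_{22}(x)$, $f_{11}(x)f_{22}(x)\mid (x^m-1)f_{12}(x)$. Let $g(x)=\gcd(g_{11}(x),g_{22}(x))$, $f(x)=\gcd(f_{11}(x),f_{22}(x))$, and write $g_{22}(x)=g(x)g_{22}'(x)$, $f_{22}(x)=f(x)f_{22}'(x)$. Then $(C,D)$ is a linear complementary pair of codes if and only if all of the following hold: (I) $\gcd(f_{11}(x),g_{11}(x))=1$; (II) $g(x)=\dfrac{x^m-1}{\mathrm{lcm}(f_{11}(x),f_{22}(x))}$; (III) $f(x)=\dfrac{x^m-1}{\mathrm{lcm}(g_{11}(x),g_{22}(x))}$; (IV) $\gcd\big(g_{22}'(x),f_{22}'(x),\,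g_{11}(x)f_{12}(x)-g_{12}(x)f_{11}(x)\big)=1$.
   Context: A pair $(C,D)$ of $\mathbb{F}_q$-linear codes of the same length $n$ is a linear complementary pair (LCP) of codes if $C\cap D=\{0\}$ and $C+D=\mathbb{F}_q^n$. A quasi-cyclic code of length $2m$ and index $2$ is a linear code of length $2m$ invariant under the square of the cyclic shift; it is identified with an $R$-submodule of $R^2$ via $(c_{0,0},c_{0,1},c_{1,0},c_{1,1},\dots,c_{m-1,0},c_{m-1,1})\mapsto(c_0(x),c_1(x))$ with $c_j(x)=\sum_{i=0}^{m-1}c_{i,j}x^i$. gcd and lcm denote monic gcd and lcm of polynomials. *)

From HB Require Import structures.
From mathcomp Require Import all_boot all_order all_algebra all_field.
Set Implicit Arguments. Unset Strict Implicit. Unset Printing Implicit Defensive.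
Import GRing.Theory.
Local Open Scope ring_scope.

Section QC.
Variable F : finFieldType.

Definition xm1 (m : nat) : {poly F} := 'X^m - 1.

(* monic normalization of a polynomial (0 stays 0) *)
Definition monicize (p : {poly F}) : {poly F} := (lead_coef p)^-1 *: p.

Definition mgcd (p q : {poly F}) : {poly F} := monicize (gcdp p q).
Definition mlcm (p q : {poly F}) : {poly F} := monicize ((p * q) %/ gcdp p q).

(* Elements of R^2, R = F[x]/<x^m-1>, are represented by pairs of
   polynomials of degree < m (canonical representatives). *)
Definition inR2 (m : nat) (c : {poly F} * {poly F}) : Prop :=
  (size c.1 <= m)%N /\ (size c.2 <= m)%N.

Definition qc_code (m : nat) (g11 g12 g22 : {poly F})
    (c : {poly F} * {poly F}) : Prop :=
  exists a b : {poly F},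
    c = ((a * g11) %% xm1 m, (a * g12 + b * g22) %% xm1 m).

Definition LCP (m : nat) (C D : {poly F} * {poly F} -> Prop) : Prop :=
  (forall c, C c -> D c -> c = (0, 0)) /\
  (forall u, inR2 m u -> exists c d, C c /\ D d /\ u = (c.1 + d.1, c.2 + d.2)).

End QC.

Arguments xm1 {F} m.
Arguments inR2 {F} m c.
Arguments qc_code {F} m g11 g12 g22 c.
Arguments LCP {F} m C D.

(* Since gcd(m, q) = 1, x^m - 1 is separable, so R is the product of the
   fields F[x]/(p) over the irreducible factors p of x^m - 1, and (C, D) is an
   LCP exactly when it is one modulo every such p.  Modulo p each code is
   spanned by the reductions of its generators, so complementarity there only
   depends on which of g11, g22, f11, f22 and g11 f12 - g12 f11 are divisible
   by p.  Since a divisor of a separable polynomial is determined by its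
   irreducible factors, conditions (I)-(IV) say the same thing factor by
   factor. *)

From HB Require Import structures.
From mathcomp Require Import all_boot all_order all_algebra all_field.
From mathcomp Require Import ring.
From Stdlib Require Import Classical.

Set Implicit Arguments. Unset Strict Implicit. Unset Printing Implicit Defensive.
Import GRing.Theory.
Local Open Scope ring_scope.

Section IrreducibleDivisors.
Variable F : fieldType.
Implicit Types p x y z A B N : {poly F}.

Lemma Euclid_dvdpM p x y :
  irreducible_poly p -> (p %| x * y) = (p %| x) || (p %| y).
Proof.
move=> p_irr; apply/idP/orP => [pxy | [px | py]]; last 2 first.
- exact: dvdp_mulr.
- exact: dvdp_mull.
have [px | npx] := boolP (p %| x); [by left | right].
by rewrite -(Gauss_dvdpr _ (_ : coprimep p x)) // irreducible_poly_coprime.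
Qed.

Lemma irredp_dvdp1F p : irreducible_poly p -> (p %| 1) = false.
Proof. by move=> p_irr; rewrite dvdp1 gtn_eqF ?p_irr.1. Qed.

Lemma irredp_dvdp_exists x : (1 < size x)%N -> exists2 p, irreducible_poly p & p %| x.
Proof.
have [n] := ubnP (size x); elim: n x => // n IHn x lt_x_n x_gt1.
have [x_irr | x_red] := classic (irreducible_poly x); first by exists x.
have [q [q_neq1 qx x_q]] : exists q : {poly F}, [/\ size q != 1, q %| x & ~~ (q %= x)].
  apply: NNPP => no_q; apply: x_red; split=> // q q_neq1 qx.
  by apply/negPn/negP => x_q; apply: no_q; exists q.
have x_neq0 : x != 0 by rewrite -size_poly_gt0 ltnW.
have lt_q_x : (size q < size x)%N.
  by rewrite ltn_neqAle dvdp_leq // andbT dvdp_size_eqp.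
have q_gt1 : (1 < size q)%N.
  rewrite ltn_neqAle eq_sym q_neq1 size_poly_gt0.
  by apply: contraTneq qx => ->; rewrite dvd0p.
have [p p_irr pq] := IHn q (leq_trans lt_q_x lt_x_n) q_gt1.
by exists p; last exact: dvdp_trans qx.
Qed.

Lemma coprimep_irredP x y :
  coprimep x y <-> forall p, irreducible_poly p -> p %| x -> p %| y -> False.
Proof.
split=> [/coprimepP cxy p p_irr px py | no_common].
  by move: (cxy p px py); rewrite -size_poly_eq1 gtn_eqF ?p_irr.1.
rewrite /coprimep; case: ltngtP => // [| gcd_gt1].
  rewrite ltnS leqn0 size_poly_eq0 gcdp_eq0 => /andP[/eqP x0 /eqP y0].
  by case: (no_common _ (irredp_XsubC 0)); rewrite ?x0 ?y0 dvdp0.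
have [p p_irr p_gcd] := irredp_dvdp_exists gcd_gt1.
by case: (no_common p p_irr); apply: dvdp_trans p_gcd _; rewrite ?dvdp_gcdl ?dvdp_gcdr.
Qed.

Lemma separable_irredp_sqF N p :
  separable_poly N -> irreducible_poly p -> (p * p %| N) = false.
Proof.
by move=> sepN p_irr; rewrite -expr2 (separable_nosquare sepN) // gtn_eqF ?p_irr.1.
Qed.

Lemma separable_dvdp_sqM N p z :
  separable_poly N -> irreducible_poly p -> p * p %| N * z -> p %| z.
Proof.
move=> sepN p_irr; apply: contraLR => npz.
rewrite Gauss_dvdpl ?separable_irredp_sqF //.
by rewrite coprimepMl !irreducible_poly_coprime ?npz.
Qed.

Lemma separable_dvdp_irred A B :
  separable_poly A -> (forall p, irreducible_poly p -> p %| A -> p %| B) -> A %| B.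
Proof.
move=> sepA AB; set G := gcdp A B.
have eA : A %/ G * G = A by rewrite divpK ?dvdp_gcdl.
have /coprimep_irredP coQG : coprimep (A %/ G) G.
  by apply: (separable_coprime sepA); rewrite eA.
have : coprimep (A %/ G) (A %/ G).
  apply/coprimep_irredP => p p_irr pQ _; apply: (coQG p p_irr pQ).
  have pA : p %| A by rewrite -eA dvdp_mulr.
  by rewrite dvdp_gcd pA AB.
rewrite coprimepp size_poly_eq1 => Q1.
rewrite -eA (eqp_dvdl _ (eqp_mulr G Q1)) mul1r; exact: dvdp_gcdr.
Qed.

Section SeparableModulus.
Variable N : {poly F}.
Hypothesis sepN : separable_poly N.

Lemma separable_divisor_eq A B : A \is monic -> B \is monic -> A %| N -> B %| N ->
  (forall p, irreducible_poly p -> p %| N -> (p %| A) = (p %| B)) -> A = B.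
Proof.
move=> Am Bm AN BN sameAB; apply/eqP; rewrite -eqp_monic //; apply/andP.
split; first apply: separable_dvdp_irred (dvdp_separable AN sepN) _.
  by move=> p p_irr pA; rewrite -sameAB ?(dvdp_trans pA).
apply: separable_dvdp_irred (dvdp_separable BN sepN) _.
by move=> p p_irr pB; rewrite sameAB ?(dvdp_trans pB).
Qed.

Lemma dvdp_divp_separable l p : l %| N -> irreducible_poly p -> p %| N ->
  (p %| N %/ l) = ~~ (p %| l).
Proof.
move=> lN p_irr; rewrite -{1}(divpK lN) Euclid_dvdpM //.
have : ~~ ((p %| N %/ l) && (p %| l)).
  apply/andP => -[p_quo pl].
  by move: (dvdp_mul p_quo pl); rewrite divpK // separable_irredp_sqF.
by case: (p %| N %/ l); case: (p %| l).
Qed.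

End SeparableModulus.
End IrreducibleDivisors.

Section MonicGcdLcm.
Variable F : finFieldType.
Implicit Types p x y N : {poly F}.

Lemma monicize_eqp x : monicize x %= x.
Proof.
have [-> | x0] := eqVneq x 0; first by rewrite /monicize scaler0 eqpxx.
by rewrite /monicize eqp_scale // invr_eq0 lead_coef_eq0.
Qed.

Lemma monicize_monic x : x != 0 -> monicize x \is monic.
Proof. by move=> x0; rewrite monicE lead_coefZ mulVf ?lead_coef_eq0. Qed.

Lemma dvdp_mgcd p x y : (p %| mgcd x y) = (p %| x) && (p %| y).
Proof. by rewrite (eqp_dvdr _ (monicize_eqp _)) dvdp_gcd. Qed.

Lemma mgcd_dvdl x y : mgcd x y %| x.
Proof. by have := dvdpp (mgcd x y); rewrite dvdp_mgcd => /andP[]. Qed.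

Lemma mgcd_dvdr x y : mgcd x y %| y.
Proof. by have := dvdpp (mgcd x y); rewrite dvdp_mgcd => /andP[]. Qed.

Lemma mgcd_monic x y : x != 0 -> mgcd x y \is monic.
Proof. by move=> x0; rewrite monicize_monic // gcdp_eq0 negb_and x0. Qed.

Lemma mgcd_eq1 x y : mgcd x y = 1 <-> coprimep x y.
Proof.
have size_mgcd : size (mgcd x y) = size (gcdp x y) := eqp_size (monicize_eqp _).
split=> [mgcd1 | cop]; first by rewrite /coprimep -size_mgcd mgcd1 size_poly1.
have gcd0 : gcdp x y != 0.
  by apply: contraTneq cop => gcd0; rewrite /coprimep gcd0 size_poly0.
apply/eqP; rewrite -eqp_monic ?monic1 ?monicize_monic //.
by rewrite -size_poly_eq1 size_mgcd.
Qed.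

Lemma dvdp_mlcm p y1 y2 : irreducible_poly p ->
  (p %| mlcm y1 y2) = (p %| y1) || (p %| y2).
Proof.
move=> p_irr; set d := gcdp y1 y2.
have d_y1 : d %| y1 by exact: dvdp_gcdl.
have d_y2 : d %| y2 by exact: dvdp_gcdr.
rewrite /mlcm (eqp_dvdr _ (monicize_eqp _)); apply/idP/orP => [|[py1 | py2]].
- rewrite -divp_mulA // Euclid_dvdpM // => /orP[py1 | p_quo]; first by left.
  by right; apply: dvdp_trans p_quo (divp_dvd d_y2).
- by rewrite -divp_mulA // dvdp_mulr.
- by rewrite -divp_mulAC // dvdp_mull.
Qed.

Lemma mlcm_dvdp y1 y2 N : y1 != 0 -> y1 %| N -> y2 %| N -> mlcm y1 y2 %| N.
Proof.
move=> y1_0 y1N y2N; rewrite /mlcm (eqp_dvdl _ (monicize_eqp _)).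
set d := gcdp y1 y2.
have d_0 : d != 0 by rewrite gcdp_eq0 negb_and y1_0.
have cop : coprimep (y2 %/ d) (y1 %/ d).
  by rewrite coprimep_sym coprimep_div_gcd ?y1_0.
have /dvdpP[s Ns] := y1N; rewrite Ns in y2N *.
rewrite -divp_mulA ?dvdp_gcdr // mulrC dvdp_mul2r // -(Gauss_dvdpl s cop).
by rewrite -(dvdp_mul2r _ _ d_0) -mulrA !divpK ?dvdp_gcdl ?dvdp_gcdr.
Qed.

Lemma mlcm_monic y1 y2 : y1 != 0 -> y2 != 0 -> mlcm y1 y2 \is monic.
Proof.
move=> y1_0 y2_0; apply: monicize_monic.
by rewrite -divp_mulA ?dvdp_gcdr // mulf_neq0 // dvdp_div_eq0 ?dvdp_gcdr.
Qed.

Lemma mgcd_eq1_local N x y : x %| N ->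
  mgcd x y = 1 <-> forall p, irreducible_poly p -> p %| N -> ~~ ((p %| x) && (p %| y)).
Proof.
move=> xN; rewrite mgcd_eq1 coprimep_irredP.
split=> [no_common p p_irr _ | local_cop p p_irr px py].
  by apply/andP => -[px py]; apply: no_common p_irr px py.
by have := local_cop p p_irr (dvdp_trans px xN); rewrite px py.
Qed.

Section SeparableModulus.
Variable N : {poly F}.
Hypotheses (sepN : separable_poly N) (monicN : N \is monic).

Lemma mgcd_eq_divp_mlcm_local x1 x2 y1 y2 : x1 %| N -> y1 %| N -> y2 %| N ->
  mgcd x1 x2 = N %/ mlcm y1 y2 <->
  forall p, irreducible_poly p -> p %| N ->
    (p %| x1) && (p %| x2) = ~~ (p %| y1) && ~~ (p %| y2).
Proof.
move=> x1N y1N y2N.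
have divN_neq0 y : y %| N -> y != 0.
  by apply: contraTneq => ->; rewrite dvd0p separable_poly_neq0.
have lcmN := mlcm_dvdp (divN_neq0 _ y1N) y1N y2N.
have dvdp_quo p : irreducible_poly p -> p %| N ->
    (p %| N %/ mlcm y1 y2) = ~~ (p %| y1) && ~~ (p %| y2).
  by move=> p_irr pN; rewrite dvdp_divp_separable // dvdp_mlcm // negb_or.
split=> [e p p_irr pN | same]; first by rewrite -dvdp_mgcd e dvdp_quo.
apply: (separable_divisor_eq sepN).
- exact: mgcd_monic (divN_neq0 _ x1N).
- by rewrite -(monicMr _ (mlcm_monic (divN_neq0 _ y1N) (divN_neq0 _ y2N))) divpK.
- exact: dvdp_trans (mgcd_dvdl _ _) x1N.
- exact: divp_dvd.
by move=> p p_irr pN; rewrite dvdp_mgcd same ?dvdp_quo.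
Qed.

Lemma dvdp_divp_mgcd x1 x2 p : x2 %| N -> irreducible_poly p ->
  (p %| x2 %/ mgcd x1 x2) = (p %| x2) && ~~ (p %| x1).
Proof.
move=> x2N p_irr; have [px2 | npx2] := boolP (p %| x2).
  rewrite (dvdp_divp_separable (dvdp_separable x2N sepN)) ?mgcd_dvdr //.
  by rewrite dvdp_mgcd px2 andbT.
by apply/negbTE; apply: contra npx2 => /dvdp_trans; apply; rewrite divp_dvd ?mgcd_dvdr.
Qed.

End SeparableModulus.
End MonicGcdLcm.

Lemma natr_coprime_card_neq0 (F : finFieldType) m : coprime m #|F| -> m%:R != 0 :> F.
Proof.
move=> cop; have [p p_pr charFp] := finPcharP F.
have pF : (p %| #|F|)%N.
  have := finNzRing_gt1 F; rewrite (card_pprimeChar charFp).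
  by case: logn => // n _; rewrite expnS dvdn_mulr.
rewrite -(dvdn_pcharf charFp); apply/negP => pm.
by move: (coprime_dvdl pm cop); rewrite prime_coprime // pF.
Qed.

Ltac dvdp_combination :=
  solve [ assumption | apply: dvdp0
        | apply/andP; split; dvdp_combination
        | apply: dvdp_add; dvdp_combination | apply: dvdp_sub; dvdp_combination
        | apply: dvdp_mull; dvdp_combination | apply: dvdp_mulr; dvdp_combination ].

Section QuasiCyclicCodes.
Variables (F : finFieldType) (m : nat).
Hypothesis m_gt0 : (0 < m)%N.
Local Notation N := (xm1 m : {poly F}).
Implicit Types p a b : {poly F}.

Definition trivial_meet (C D : {poly F} * {poly F} -> Prop) :=
  forall c, C c -> D c -> c = (0, 0).

Definition spanning (C D : {poly F} * {poly F} -> Prop) :=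
  forall u, inR2 m u -> exists c d, C c /\ D d /\ u = (c.1 + d.1, c.2 + d.2).

Lemma size_xm1 : size N = m.+1.
Proof. exact: size_XnsubC. Qed.

Lemma xm1_neq0 : N != 0.
Proof. by rewrite -size_poly_gt0 size_xm1. Qed.

Lemma spanning_ndvdp11 g11 g12 g22 f11 f12 f22 p :
  spanning (qc_code m g11 g12 g22) (qc_code m f11 f12 f22) ->
  irreducible_poly p -> p %| N -> p %| g11 -> p %| f11 -> False.
Proof.
move=> span p_irr pN pg11 pf11.
have [|c [d [[a [b ->]] [[a' [b' ->]] [e1 _]]]]] := span (1, 0).
  by rewrite /inR2 size_poly1 size_poly0.
suff : p %| 1 by rewrite irredp_dvdp1F.
by rewrite e1 -modpD -(dvdp_mod _ pN); dvdp_combination.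
Qed.

Lemma spanning_ndvdp22 g11 g12 g22 f11 f12 f22 p :
  spanning (qc_code m g11 g12 g22) (qc_code m f11 f12 f22) ->
  irreducible_poly p -> p %| N -> p %| g22 -> p %| f22 ->
  p %| g11 * f12 - g12 * f11 -> False.
Proof.
move=> span p_irr pN pg22 pf22 pdelta.
have [|c [d [[a [b ->]] [[a' [b' ->]] [e1 e2]]]]] := span (0, 1).
  by rewrite /inR2 size_poly1 size_poly0.
set X := a * g11 + a' * f11.
set Y := a * g12 + b * g22 + (a' * f12 + b' * f22).
have pX : p %| X by rewrite (dvdp_mod _ pN) modpD -e1 dvdp0.
have pY : p %| Y - 1.
  rewrite (dvdp_mod _ pN) modpD modpN modpD -e2.
  by rewrite modp_small ?size_poly1 ?size_xm1 // subrr dvdp0.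
apply: (spanning_ndvdp11 span p_irr pN).
  have -> : g11 = - g11 * (Y - 1) + a' * (g11 * f12 - g12 * f11)
                  + g11 * (b * g22 + b' * f22) + g12 * X by rewrite /X /Y; ring.
  by dvdp_combination.
have -> : f11 = - f11 * (Y - 1) - a * (g11 * f12 - g12 * f11)
                + f11 * (b * g22 + b' * f22) + f12 * X by rewrite /X /Y; ring.
by dvdp_combination.
Qed.

Lemma qc_code_cofactor g11 g12 g22 p v1 v2 : irreducible_poly p -> p %| N ->
  ~~ (p %| g11) -> ~~ (p %| g22) ->
  qc_code m g11 g12 g22 ((N %/ p * v1) %% N, (N %/ p * v2) %% N).
Proof.
move=> p_irr pN pg11 pg22.
have /Bezout_eq1_coprimepP[[u w] /= /(canRL (addrK _)) e1] : coprimep g11 p.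
  by rewrite coprimep_sym irreducible_poly_coprime.
have /Bezout_eq1_coprimepP[[u' w'] /= /(canRL (addrK _)) e2] : coprimep g22 p.
  by rewrite coprimep_sym irreducible_poly_coprime.
set P := N %/ p; have NP : N = P * p by rewrite divpK.
exists (P * (u * v1)), (P * (u' * (v2 - u * v1 * g12))); congr (_, _).
  rewrite (_ : P * (u * v1) * g11 = P * v1 + (- (v1 * w)) * N).
    by rewrite modpD modp_mull addr0.
  by rewrite NP; ring: e1.
set r := v2 - u * v1 * g12.
rewrite (_ : P * (u * v1) * g12 + P * (u' * r) * g22 = P * v2 + (- (r * w')) * N).
  by rewrite modpD modp_mull addr0.
by rewrite NP /r; ring: e2.
Qed.

Lemma trivial_meet_dvdp g11 g12 g22 f11 f12 f22 p :
  trivial_meet (qc_code m g11 g12 g22) (qc_code m f11 f12 f22) ->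
  irreducible_poly p -> p %| N -> ~~ (p %| g11) -> ~~ (p %| g22) ->
  (p %| f11) && (p %| f22).
Proof.
move=> meet0 p_irr pN pg11 pg22.
have P_neq0 : N %/ p != 0 by rewrite dvdp_div_eq0 // xm1_neq0.
have cofactor_modp0 v : (N %/ p * v) %% N = 0 -> p %| v.
  by move/modp_eq0P; rewrite -{1}(divpK pN) dvdp_mul2l.
have common v1 v2 : qc_code m f11 f12 f22 ((N %/ p * v1) %% N, (N %/ p * v2) %% N) ->
    (p %| v1) && (p %| v2).
  move/(meet0 _ (qc_code_cofactor g12 v1 v2 p_irr pN pg11 pg22)).
  by case=> /cofactor_modp0 -> /cofactor_modp0 ->.
have /andP[pf11 _] : (p %| f11) && (p %| f12).
  by apply: common; exists (N %/ p), 0; rewrite mul0r addr0.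
have /andP[_ pf22] : (p %| 0) && (p %| f22).
  by apply: common; exists 0, (N %/ p); rewrite !mul0r mulr0 add0r.
by rewrite pf11 pf22.
Qed.

(* The arguments record whether p divides g11, g22, f11, f22 and
   g11 f12 - g12 f11; in each case the reductions modulo p of the two codes
   meet trivially. *)
Definition meet0_modp_cases (G11 G22 F11 F22 Delta : bool) : bool :=
  [|| G11 && G22, [&& G11, F22 & ~~ F11] | [&& G22, F22, ~~ G11 & ~~ Delta]].

Definition qc_code_modp p g11 g12 g22 (c : {poly F} * {poly F}) :=
  exists a b, p %| c.1 - a * g11 /\ p %| c.2 - (a * g12 + b * g22).

Lemma qc_code_modp_of g11 g12 g22 p c : p %| N ->
  qc_code m g11 g12 g22 c -> qc_code_modp p g11 g12 g22 c.
Proof.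
move=> pN [a [b ->]]; exists a, b.
have dvdp_modN x : p %| x %% N - x.
  by rewrite {2}(divp_eq x N) opprD addrCA subrr addr0 dvdpNr dvdp_mull.
by rewrite !dvdp_modN.
Qed.

Lemma qc_code_modp_common0 g11 g12 g22 f11 f12 f22 p c : irreducible_poly p ->
  (p %| g11 -> p %| g22 -> p %| g12) ->
  qc_code_modp p g11 g12 g22 c -> qc_code_modp p f11 f12 f22 c ->
  meet0_modp_cases (p %| g11) (p %| g22) (p %| f11) (p %| f22)
    (p %| g11 * f12 - g12 * f11) ->
  (p %| c.1) && (p %| c.2).
Proof.
move=> p_irr hG [a [b [c1C c2C]]] [a' [b' [c1D c2D]]].
case/or3P => [/andP[pg11 pg22] | /and3P[pg11 pf22 npf11] | /and4P[pg22 pf22 npg11 npdelta]].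
- have pg12 := hG pg11 pg22.
  by rewrite (dvdp_add_eq c1C) (dvdp_add_eq c2C) !dvdpNr; dvdp_combination.
- have pc1 : p %| c.1 by rewrite (dvdp_add_eq c1C) dvdpNr dvdp_mull.
  have pa' : p %| a'.
    by move: pc1; rewrite (dvdp_add_eq c1D) dvdpNr Euclid_dvdpM // (negPf npf11) orbF.
  by rewrite pc1 (dvdp_add_eq c2D) dvdpNr; dvdp_combination.
have pa : p %| a.
  suff : p %| a * (g11 * f12 - g12 * f11) by rewrite Euclid_dvdpM // (negPf npdelta) orbF.
  have -> : a * (g11 * f12 - g12 * f11) =
      f12 * ((c.1 - a' * f11) - (c.1 - a * g11))
      - f11 * ((c.2 - (a' * f12 + b' * f22)) - (c.2 - (a * g12 + b * g22)))
      + f11 * (b * g22 - b' * f22) by ring.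
  by dvdp_combination.
by rewrite (dvdp_add_eq c1C) (dvdp_add_eq c2C) !dvdpNr; dvdp_combination.
Qed.

(* Modulo an irreducible p | x^m - 1 the code generated by (g11, g12) and
   (0, g22) reduces to a subspace of (F[x]/(p))^2 of dimension
   2 - [p | g11] - [p | g22] (p | g11 and p | g22 force p | g12), so the last
   conjunct bounds the sum of the two dimensions by 2. *)
Definition local_LCP p g11 g12 g22 f11 f12 f22 : bool :=
  [&& ~~ ((p %| g11) && (p %| f11)),
      ~~ [&& p %| g22, p %| f22 & p %| g11 * f12 - g12 * f11]
    & (2 <= (p %| g11)%R + (p %| g22)%R + (p %| f11)%R + (p %| f22)%R)%N].

Lemma trivial_meet_local g11 g12 g22 f11 f12 f22 : separable_poly N ->
  (forall p, irreducible_poly p -> p %| g11 -> p %| g22 -> p %| g12) ->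
  (forall p, irreducible_poly p -> p %| f11 -> p %| f22 -> p %| f12) ->
  (forall p, irreducible_poly p -> p %| N -> local_LCP p g11 g12 g22 f11 f12 f22) ->
  trivial_meet (qc_code m g11 g12 g22) (qc_code m f11 f12 f22).
Proof.
move=> sepN hG hF loc c cC cD.
have pc p : irreducible_poly p -> p %| N -> (p %| c.1) && (p %| c.2).
  move=> p_irr pN; have cCp := qc_code_modp_of pN cC; have cDp := qc_code_modp_of pN cD.
  have delta_sym : (p %| f11 * g12 - f12 * g11) = (p %| g11 * f12 - g12 * f11).
    by rewrite -dvdpNr; congr (_ %| _); ring.
  have : meet0_modp_cases (p %| g11) (p %| g22) (p %| f11) (p %| f22)
           (p %| g11 * f12 - g12 * f11)
      || meet0_modp_cases (p %| f11) (p %| f22) (p %| g11) (p %| g22)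
           (p %| g11 * f12 - g12 * f11).
    move: (loc p p_irr pN); rewrite /local_LCP /meet0_modp_cases.
    by case: (p %| g11) (p %| g22) (p %| f11) (p %| f22) (p %| _ - _) => [] [] [] [] [].
  case/orP => [cases_gf | cases_fg].
    exact: qc_code_modp_common0 (hG p p_irr) cCp cDp cases_gf.
  rewrite -delta_sym in cases_fg.
  exact: qc_code_modp_common0 (hF p p_irr) cDp cCp cases_fg.
case: cC pc => a [b ->] pc.
congr (_, _); apply/modp_eq0P; apply: (separable_dvdp_irred sepN) => p p_irr pN;
  by rewrite (dvdp_mod _ pN); have /andP[] := pc p p_irr pN.
Qed.

Lemma spanning_coprime g11 g12 g22 f11 f12 f22 :
  coprimep g11 f11 -> coprimep (gcdp g22 f22) (g11 * f12 - g12 * f11) ->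
  spanning (qc_code m g11 g12 g22) (qc_code m f11 f12 f22).
Proof.
move=> /Bezout_eq1_coprimepP[[u0 v0] /= e1].
have [[k1 k2] /= gcd_comb] := Bezoutp g22 f22.
rewrite -(eqp_coprimepl _ gcd_comb) => /Bezout_eq1_coprimepP[[s t] /= e2].
move=> [u1 u2] [/= size_u1 size_u2].
(* Bezout for (g11, f11) produces the first coordinate; the error r in the
   second one is then absorbed by 1 = s (k1 g22 + k2 f22) + t delta, where
   t delta = t f12 g11 - t g12 f11 does not change the first coordinate. *)
set r := u2 - u1 * (u0 * g12 + v0 * f12).
pose A := u1 * u0 - r * t * f11; pose A' := u1 * v0 + r * t * g11.
exists ((A * g11) %% N, (A * g12 + r * s * k1 * g22) %% N).
exists ((A' * f11) %% N, (A' * f12 + r * s * k2 * f22) %% N).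
split; first by exists A, (r * s * k1).
split; first by exists A', (r * s * k2).
rewrite /= -!modpD.
have -> : A * g11 + A' * f11 = u1 * (u0 * g11 + v0 * f11) by rewrite /A /A'; ring.
have -> : A * g12 + r * s * k1 * g22 + (A' * f12 + r * s * k2 * f22) =
    u1 * (u0 * g12 + v0 * f12) +
    r * (s * (k1 * g22 + k2 * f22) + t * (g11 * f12 - g12 * f11)).
  by rewrite /A /A'; ring.
by rewrite e1 e2 !mulr1 /r addrC subrK !modp_small ?size_xm1.
Qed.

Lemma LCP_local_necessary g11 g12 g22 f11 f12 f22 p :
  LCP m (qc_code m g11 g12 g22) (qc_code m f11 f12 f22) ->
  irreducible_poly p -> p %| N -> local_LCP p g11 g12 g22 f11 f12 f22.
Proof.
move=> [meet0 span] p_irr pN; apply/and3P; split.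
- by apply/negP => /andP[]; apply: spanning_ndvdp11 span p_irr pN.
- by apply/negP => /and3P[]; apply: spanning_ndvdp22 span p_irr pN.
have meet0' : trivial_meet (qc_code m f11 f12 f22) (qc_code m g11 g12 g22).
  by move=> c cD cC; apply: meet0.
move: (trivial_meet_dvdp meet0 p_irr pN) (trivial_meet_dvdp meet0' p_irr pN).
case: (p %| g11) (p %| g22) (p %| f11) (p %| f22) => [] [] [] [] //= hgf hfg.
all: first [by have := hgf isT isT | by have := hfg isT isT].
Qed.

Lemma LCP_local g11 g12 g22 f11 f12 f22 :
  separable_poly N -> g11 %| N -> g22 %| N ->
  (forall p, irreducible_poly p -> p %| g11 -> p %| g22 -> p %| g12) ->
  (forall p, irreducible_poly p -> p %| f11 -> p %| f22 -> p %| f12) ->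
  LCP m (qc_code m g11 g12 g22) (qc_code m f11 f12 f22) <->
  forall p, irreducible_poly p -> p %| N -> local_LCP p g11 g12 g22 f11 f12 f22.
Proof.
move=> sepN g11N g22N hG hF.
split=> [lcp p | loc]; first exact: LCP_local_necessary.
split; first exact: trivial_meet_local.
apply: spanning_coprime.
  apply/coprimep_irredP => p p_irr pg11 pf11.
  by have := loc p p_irr (dvdp_trans pg11 g11N); rewrite /local_LCP pg11 pf11.
apply/coprimep_irredP => p p_irr; rewrite dvdp_gcd => /andP[pg22 pf22] pdelta.
by have := loc p p_irr (dvdp_trans pg22 g22N); rewrite /local_LCP pg22 pf22 pdelta andbF.
Qed.

Definition local_gcd_conditions p g11 g12 g22 f11 f12 f22 : bool :=
  [&& ~~ ((p %| f11) && (p %| g11)),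
      (p %| g11) && (p %| g22) == ~~ (p %| f11) && ~~ (p %| f22),
      (p %| f11) && (p %| f22) == ~~ (p %| g11) && ~~ (p %| g22)
    & ~~ [&& (p %| g22) && ~~ (p %| g11), (p %| f22) && ~~ (p %| f11)
           & p %| g11 * f12 - g12 * f11]].

Lemma local_LCP_gcd_conditions p g11 g12 g22 f11 f12 f22 :
  (p %| g11 -> p %| g22 -> p %| g12) -> (p %| f11 -> p %| f22 -> p %| f12) ->
  local_LCP p g11 g12 g22 f11 f12 f22 = local_gcd_conditions p g11 g12 g22 f11 f12 f22.
Proof.
move=> hG hF.
have delta_G : (p %| g11) && (p %| g22) ==> (p %| g11 * f12 - g12 * f11).
  by apply/implyP => /andP[pg11 pg22]; have pg12 := hG pg11 pg22; dvdp_combination.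
have delta_F : (p %| f11) && (p %| f22) ==> (p %| g11 * f12 - g12 * f11).
  by apply/implyP => /andP[pf11 pf22]; have pf12 := hF pf11 pf22; dvdp_combination.
have delta_GF : (p %| g11) && (p %| f11) ==> (p %| g11 * f12 - g12 * f11).
  by apply/implyP => /andP[pg11 pf11]; dvdp_combination.
move: delta_G delta_F delta_GF; rewrite /local_LCP /local_gcd_conditions.
by case: (p %| g11) (p %| g22) (p %| f11) (p %| f22) (p %| _ - _) => [] [] [] [] [].
Qed.

Lemma gcd_conditions_local g11 g12 g22 f11 f12 f22 : separable_poly N ->
  g11 %| N -> g22 %| N -> f11 %| N -> f22 %| N ->
  [/\ mgcd f11 g11 = 1, mgcd g11 g22 = N %/ mlcm f11 f22,
      mgcd f11 f22 = N %/ mlcm g11 g22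
    & mgcd (mgcd (g22 %/ mgcd g11 g22) (f22 %/ mgcd f11 f22)) (g11 * f12 - g12 * f11) = 1]
  <-> forall p, irreducible_poly p -> p %| N -> local_gcd_conditions p g11 g12 g22 f11 f12 f22.
Proof.
move=> sepN g11N g22N f11N f22N.
have monicN : N \is monic by exact: monicXnsubC.
have quoN : mgcd (g22 %/ mgcd g11 g22) (f22 %/ mgcd f11 f22) %| N.
  exact: dvdp_trans (mgcd_dvdl _ _) (dvdp_trans (divp_dvd (mgcd_dvdr _ _)) g22N).
have cond2 := mgcd_eq_divp_mlcm_local sepN monicN g22 g11N f11N f22N.
have cond3 := mgcd_eq_divp_mlcm_local sepN monicN f22 f11N g11N g22N.
have quo_cond p : irreducible_poly p ->
    (p %| mgcd (g22 %/ mgcd g11 g22) (f22 %/ mgcd f11 f22)) && (p %| g11 * f12 - g12 * f11)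
    = [&& (p %| g22) && ~~ (p %| g11), (p %| f22) && ~~ (p %| f11)
        & p %| g11 * f12 - g12 * f11].
  by move=> p_irr; rewrite dvdp_mgcd !(dvdp_divp_mgcd sepN) // -andbA.
rewrite /local_gcd_conditions; split.
  case=> /(mgcd_eq1_local _ f11N) c1 /cond2 c2 /cond3 c3 /(mgcd_eq1_local _ quoN) c4 p p_irr pN.
  by rewrite c1 // c2 // c3 // !eqxx -quo_cond // c4.
move=> loc; split.
- by apply/(mgcd_eq1_local _ f11N) => p p_irr pN; case/and4P: (loc p p_irr pN).
- by apply/cond2 => p p_irr pN; case/and4P: (loc p p_irr pN) => _ /eqP.
- by apply/cond3 => p p_irr pN; case/and4P: (loc p p_irr pN) => _ _ /eqP.
apply/(mgcd_eq1_local _ quoN) => p p_irr pN.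
by rewrite quo_cond //; case/and4P: (loc p p_irr pN).
Qed.

End QuasiCyclicCodes.

Unset Implicit Arguments.

Theorem theorem3p3 (F : finFieldType) (m : nat) (hm : (0 < m)%N)
  (hcop : coprime m #|F|)
  (g11 g12 g22 f11 f12 f22 : {poly F})
  (hg11 : g11 %| xm1 m) (hg22 : g22 %| xm1 m)
  (hg12 : (size g12 < size g22)%N)
  (hg : g11 * g22 %| xm1 m * g12)
  (hf11 : f11 %| xm1 m) (hf22 : f22 %| xm1 m)
  (hf12 : (size f12 < size f22)%N)
  (hf : f11 * f22 %| xm1 m * f12) :
  let g := mgcd g11 g22 in
  let f := mgcd f11 f22 in
  let g22' := g22 %/ g in
  let f22' := f22 %/ f in
  LCP m (qc_code m g11 g12 g22) (qc_code m f11 f12 f22) <->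
  [/\ mgcd f11 g11 = 1,
      g = xm1 m %/ mlcm f11 f22,
      f = xm1 m %/ mlcm g11 g22
    & mgcd (mgcd g22' f22') (g11 * f12 - g12 * f11) = 1].
Proof.
move=> g f g22' f22'; rewrite {}/g22' {}/f22' {}/g {}/f.
have sepN : separable_poly (xm1 m : {poly F}).
  exact/separable_Xn_sub_1/natr_coprime_card_neq0.
have hG p : irreducible_poly p -> p %| g11 -> p %| g22 -> p %| g12.
  move=> p_irr pg11 pg22; apply: (separable_dvdp_sqM sepN p_irr).
  exact: dvdp_trans (dvdp_mul pg11 pg22) hg.
have hF p : irreducible_poly p -> p %| f11 -> p %| f22 -> p %| f12.
  move=> p_irr pf11 pf22; apply: (separable_dvdp_sqM sepN p_irr).
  exact: dvdp_trans (dvdp_mul pf11 pf22) hf.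
(* The degree bounds hg12 and hf12 only normalise the generators. *)
rewrite (LCP_local hm sepN hg11 hg22 hG hF).
rewrite (gcd_conditions_local hm g12 f12 sepN hg11 hg22 hf11 hf22).
split=> loc p p_irr pN; have := loc p p_irr pN;
  by rewrite (local_LCP_gcd_conditions (hG p p_irr) (hF p p_irr)).
Qed.
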